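(* Let $G$ be a $k$-monotone bipartite $\epsilon$-expander with ordered bipartition $A=(v_1,\dots,v_n)$ and $B=(w_1,\dots,w_m)$ (so $n=m$). Let $G'$ be the graph with $V(G')=V(G)$ and $E(G')=\{v_iw_j,\ v_jw_i : v_iw_j\in E(G)\}$. Then $G'$ is a two-sided $2k$-monotone bipartite $\epsilon$-expander (with respect to the same ordered bipartition).
   Context: For $\epsilon\in(0,1]$, a bipartite graph $G$ with bipartition $A,B$ is a bipartite $\epsilon$-expander if $|A|=|B|$ and $|N(S)|\geq(1+\epsilon)|S|$ for every $S\subset A$ with $|S|\leq|A|/2$, where $N(S)$ is the set of vertices adjacent to some vertex of $S$. It is a two-sided bipartite $\epsilon$-expander if additionally $|N(T)|\geq(1+\epsilon)|T|$ for every $T\subset B$ with $|T|\leq|B|/2$. For a bipartite graph with ordered colour classes $(v_1,\dots,v_n)$ and $(w_1,\dots,w_m)$, edges $v_iw_j$ and $v_kw_\ell$ cross if $i<k$ and $\ell<j$; a matching is monotone if no two of its edges cross; the graph is $d$-monotone if its edge set is the union of $d$ monotone matchings. *)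

From HB Require Import structures.
From mathcomp Require Import all_boot all_order all_algebra.
Set Implicit Arguments. Unset Strict Implicit. Unset Printing Implicit Defensive.
Import Order.TTheory GRing.Theory Num.Theory.

(* A bipartite graph with ordered colour classes A = (v_0,...,v_{n-1}) and
   B = (w_0,...,w_{m-1}) is given by its edge set E : {set 'I_n * 'I_m};
   the pair (i, j) stands for the edge v_i w_j. *)

Section Bip.
Variables n m : nat.
Implicit Types (E M : {set 'I_n * 'I_m}).

Definition nbrA E (S : {set 'I_n}) : {set 'I_m} :=
  [set j | [exists i in S, (i, j) \in E]].
Definition nbrB E (T : {set 'I_m}) : {set 'I_n} :=
  [set i | [exists j in T, (i, j) \in E]].

Definition cross (e f : 'I_n * 'I_m) : bool := (e.1 < f.1)%N && (f.2 < e.2)%N.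

Definition is_matching M : Prop :=
  forall e f, e \in M -> f \in M -> e != f -> (e.1 != f.1) && (e.2 != f.2).

Definition monotone_matching M : Prop :=
  is_matching M /\ forall e f, e \in M -> f \in M -> ~~ cross e f.

Definition d_monotone (d : nat) E : Prop :=
  exists Ms : 'I_d -> {set 'I_n * 'I_m},
    (forall t, monotone_matching (Ms t)) /\ E = \bigcup_(t < d) Ms t.
End Bip.

Local Open Scope ring_scope.

Definition bip_expander (R : realFieldType) (eps : R) (n : nat)
  (E : {set 'I_n * 'I_n}) : Prop :=
  forall S : {set 'I_n}, (#|S|%:R <= n%:R / 2 :> R) ->
    (1 + eps) * #|S|%:R <= #|nbrA E S|%:R.

Definition two_sided_bip_expander (R : realFieldType) (eps : R) (n : nat)
  (E : {set 'I_n * 'I_n}) : Prop :=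
  bip_expander eps E /\
  forall T : {set 'I_n}, (#|T|%:R <= n%:R / 2 :> R) ->
    (1 + eps) * #|T|%:R <= #|nbrB E T|%:R.

Definition symmetrize (n : nat) (E : {set 'I_n * 'I_n}) : {set 'I_n * 'I_n} :=
  [set p | (p \in E) || ((p.2, p.1) \in E)].

From mathcomp Require Import all_boot all_order all_algebra.
Import Order.TTheory GRing.Theory Num.Theory.
Local Open Scope ring_scope.
Set Implicit Arguments.

(* G' is the union of G and its transpose G^T, where v_i w_j is an edge of G^T
   iff v_j w_i is an edge of G.  Swapping the two coordinates of every edge
   preserves matchings and the crossing relation, so G^T is k-monotone and G'
   is 2k-monotone.  Adding edges only enlarges neighbourhoods, so G' expands
   from A as G does; and the neighbourhood in G^T of a set of indices T taken
   in B is its neighbourhood in G taken in A, so G' expands from B as well. *)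

Definition transpose_edges (n m : nat) (E : {set 'I_n * 'I_m}) :
    {set 'I_m * 'I_n} :=
  [set p | (p.2, p.1) \in E].

Lemma in_transpose_edges (n m : nat) (E : {set 'I_n * 'I_m}) i j :
  ((j, i) \in transpose_edges E) = ((i, j) \in E).
Proof. by rewrite inE. Qed.

Lemma symmetrizeE (n : nat) (E : {set 'I_n * 'I_n}) :
  symmetrize E = E :|: transpose_edges E.
Proof. by apply/setP => p; rewrite !inE. Qed.

Section Neighbourhoods.
Variables n m : nat.
Implicit Types E F : {set 'I_n * 'I_m}.

Lemma nbrAS E F S : E \subset F -> nbrA E S \subset nbrA F S.
Proof.
move=> /subsetP sEF; apply/subsetP => j; rewrite !inE.
by case/existsP => i /andP[iS /sEF ijF]; apply/existsP; exists i; rewrite iS.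
Qed.

Lemma nbrBS E F T : E \subset F -> nbrB E T \subset nbrB F T.
Proof.
move=> /subsetP sEF; apply/subsetP => i; rewrite !inE.
by case/existsP => j /andP[jT /sEF ijF]; apply/existsP; exists j; rewrite jT.
Qed.

Lemma nbrB_transpose E (S : {set 'I_n}) : nbrB (transpose_edges E) S = nbrA E S.
Proof.
by apply/setP => j; rewrite !inE; apply: eq_existsb => i; rewrite in_transpose_edges.
Qed.

Lemma monotone_matching_transpose E :
  monotone_matching E -> monotone_matching (transpose_edges E).
Proof.
case=> matchE crossE; split=> [[j i] [l k] | [j i] [l k]]; rewrite !in_transpose_edges.
  move=> ijE klE neq; rewrite /= andbC; apply: (matchE (i, j) (k, l)) => //.
  by apply: contra neq => /eqP[-> ->].
by move=> ijE klE; rewrite /cross /= andbC; exact: (crossE (k, l) (i, j)).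
Qed.

Lemma d_monotone_transpose d E :
  d_monotone d E -> d_monotone d (transpose_edges E).
Proof.
case=> Ms [monoMs ->]; exists (fun t => transpose_edges (Ms t)); split.
  by move=> t; exact: monotone_matching_transpose.
apply/setP => -[j i]; rewrite in_transpose_edges.
by apply/bigcupP/bigcupP => -[t _ ijMt]; exists t; rewrite ?in_transpose_edges in ijMt *.
Qed.

Lemma d_monotoneU d1 d2 E F :
  d_monotone d1 E -> d_monotone d2 F -> d_monotone (d1 + d2) (E :|: F).
Proof.
case=> Ms [monoMs ->] [Ns [monoNs ->]].
pose MNs t := match split t with inl s => Ms s | inr s => Ns s end.
exists MNs; split.
  by move=> t; rewrite /MNs; case: (split t).
rewrite /MNs big_split_ord /=.
by congr (_ :|: _); apply: eq_bigr => s _; rewrite (unsplitK (inl _), unsplitK (inr _)).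
Qed.

End Neighbourhoods.

Lemma bip_expanderS (R : realFieldType) (eps : R) (n : nat)
  (E F : {set 'I_n * 'I_n}) :
  E \subset F -> bip_expander eps E -> bip_expander eps F.
Proof.
move=> sEF expE S small_S; apply: le_trans (expE S small_S) _.
by rewrite ler_nat subset_leq_card // nbrAS.
Qed.

Lemma two_sided_bip_expander_symmetrize (R : realFieldType) (eps : R) (n : nat)
  (E : {set 'I_n * 'I_n}) :
  bip_expander eps E -> two_sided_bip_expander eps (symmetrize E).
Proof.
move=> expE; rewrite symmetrizeE; split; first exact: bip_expanderS (subsetUl _ _) expE.
move=> T small_T; apply: le_trans (expE T small_T) _.
by rewrite ler_nat -nbrB_transpose subset_leq_card // nbrBS // subsetUr.
Qed.

Theorem lemma6 (R : realFieldType) (eps : R) (k n : nat)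
  (E : {set 'I_n * 'I_n}) :
  0 < eps -> eps <= 1 ->
  d_monotone k E -> bip_expander eps E ->
  two_sided_bip_expander eps (symmetrize E) /\ d_monotone (2 * k)%N (symmetrize E).
Proof.
move=> _ _ monoE expE; split; first exact: two_sided_bip_expander_symmetrize.
rewrite symmetrizeE mul2n -addnn.
exact: d_monotoneU monoE (d_monotone_transpose monoE).
Qed.
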